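(* Consider the following game among $N \ge 2$ domains $i = 1,\dots,N$. Domain $i$ chooses quality $q_i \in [0,1]$ and generality $g_i \in [0,1]$ and receives payoff \[ \pi_i = \alpha_i q_i (1 + \beta g_i) + \lambda \sum_{j \neq i} q_j g_j - \Big(\tfrac{\gamma_q}{2} q_i^2 + \tfrac{\gamma_g}{2} g_i^2 q_i + \kappa g_i\Big), \] with parameters $\alpha_i > 0$, $\beta \ge 0$, $\lambda > 0$, $\gamma_q, \gamma_g > 0$, $\kappa \ge 0$. Fix quality levels $q_i > 0$. Let $g_i^{NE}$ be the Nash equilibrium generality of domain $i$ (the maximizer of $\pi_i$ over $g_i$, taking the other domains' choices as given) and let $g_i^{SO}$ be the socially optimal generality (the maximizer over $g_i$ of total domain welfare $\sum_{k=1}^N \pi_k$, abstracting from any consumer utility term), and suppose both are interior solutions characterized by their first-order conditions. Then $g_i^{NE} < g_i^{SO}$, and the generality gap is \[ \Delta g_i = g_i^{SO} - g_i^{NE} = \frac{(N-1)\lambda}{\gamma_g}, \] which is increasing in $N$ and $\lambda$ and decreasing in $\gamma_g$.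
   Context: The model describes an organization with $N$ domain teams producing data products; $q_i$ is the quality and $g_i$ the cross-domain generality (reusability) of domain $i$'s product. The payoff consists of own-analytics benefit $\alpha_i q_i(1+\beta g_i)$, cross-domain benefit $\lambda\sum_{j\ne i} q_j g_j$ from other domains' products, and cost $C_i(q_i,g_i) = \frac{\gamma_q}{2}q_i^2 + \frac{\gamma_g}{2}g_i^2 q_i + \kappa g_i$. *)

From mathcomp Require Import all_boot all_order all_algebra.
Set Implicit Arguments. Unset Strict Implicit. Unset Printing Implicit Defensive.
Import Order.TTheory GRing.Theory Num.Theory.
Local Open Scope ring_scope.

Section DataGame.
Variables (R : realFieldType) (N : nat).

Definition payoff (alpha : 'I_N -> R) (beta lambda gq gg kappa : R)
    (q g : 'I_N -> R) (i : 'I_N) : R :=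
  alpha i * q i * (1 + beta * g i)
  + lambda * (\sum_(j < N | j != i) q j * g j)
  - (gq / 2 * q i ^+ 2 + gg / 2 * g i ^+ 2 * q i + kappa * g i).

Definition welfare (alpha : 'I_N -> R) (beta lambda gq gg kappa : R)
    (q g : 'I_N -> R) : R :=
  \sum_(k < N) payoff alpha beta lambda gq gg kappa q g k.

Definition upd (g : 'I_N -> R) (i : 'I_N) (x : R) : 'I_N -> R :=
  fun j => if j == i then x else g j.

Definition gen_gap (n : nat) (lambda gg : R) : R := (n%:R - 1) * lambda / gg.

End DataGame.

(* Domain i's payoff and total welfare are both concave quadratics in g_i with
   the same curvature gamma_g q_i / 2; welfare only adds the linear term
   (N - 1) lambda q_i g_i, the spillover of domain i's product to the N - 1
   other domains.  An interior maximiser of a x - b x^2 on [0, 1] satisfies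
   a = 2 b x, so subtracting the two first-order conditions gives
   gamma_g q_i (g_i^SO - g_i^NE) = (N - 1) lambda q_i. *)
From mathcomp Require Import all_boot all_order all_algebra.
From mathcomp Require Import ring lra.
Set Implicit Arguments. Unset Strict Implicit. Unset Printing Implicit Defensive.
Import Order.TTheory GRing.Theory Num.Theory.
Local Open Scope ring_scope.

Lemma le0_of_le_small (R : realFieldType) (c e y : R) : 0 < e ->
  (forall h, 0 < h -> h <= e -> y <= c * h) -> y <= 0.
Proof.
move=> e_gt0 y_le; apply/ler_addgt0Pr => eps eps_gt0; rewrite add0r.
pose h := Num.min e (eps / (`|c| + 1)).
have c1_gt0 : 0 < `|c| + 1 by rewrite ltr_wpDl.
have h_gt0 : 0 < h by rewrite lt_min e_gt0 divr_gt0.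
have h_le : (`|c| + 1) * h <= eps.
  by rewrite mulrC -ler_pdivlMr // ge_min lexx orbT.
have h_le_e : h <= e by rewrite ge_min lexx.
have := y_le h h_gt0 h_le_e; have := ler_norm c; nra.
Qed.

Lemma interior_max_quadratic (R : realFieldType) (a b x0 : R) : 0 < x0 < 1 ->
  (forall x, 0 <= x <= 1 -> a * x - b * x ^+ 2 <= a * x0 - b * x0 ^+ 2) ->
  a = 2 * b * x0.
Proof.
move=> /andP[x0_gt0 x0_lt1] x0_max.
set e := Num.min x0 (1 - x0).
have e_gt0 : 0 < e by rewrite lt_min x0_gt0 subr_gt0.
have small_step h : 0 < h -> h <= e -> 0 <= x0 - h <= 1 /\ 0 <= x0 + h <= 1.
  by move=> h_gt0; rewrite le_min => /andP[? ?]; split; apply/andP; split; lra.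
(* The increment from x0 to x0 + h is h (a - 2 b x0) - b h^2. *)
have up : a - 2 * b * x0 <= 0.
  apply: (le0_of_le_small (c := b) e_gt0) => h h_gt0 /(small_step _ h_gt0) [_ h_ok].
  have := x0_max _ h_ok; rewrite !expr2; nra.
have down : 2 * b * x0 - a <= 0.
  apply: (le0_of_le_small (c := b) e_gt0) => h h_gt0 /(small_step _ h_gt0) [h_ok _].
  have := x0_max _ h_ok; rewrite !expr2; nra.
lra.
Qed.

Lemma sumr_except (R : zmodType) (I : finType) (F : I -> R) (i : I) :
  \sum_(j | j != i) F j = \sum_j F j - F i.
Proof. by rewrite [in RHS](bigD1 i) //= addrC addrK. Qed.

Lemma upd_in_unit_box (R : realFieldType) (N : nat) (g : 'I_N -> R) i x :
  (forall j, 0 <= g j <= 1) -> 0 <= x <= 1 -> forall j, 0 <= upd g i x j <= 1.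
Proof. by move=> g_box x01 j; rewrite /upd; case: eqP. Qed.

Section GeneralityChoice.
Variables (R : realFieldType) (N : nat) (alpha : 'I_N -> R).
Variables (beta lambda gq gg kappa : R) (q : 'I_N -> R).

Local Notation pay := (payoff alpha beta lambda gq gg kappa q).
Local Notation W := (welfare alpha beta lambda gq gg kappa q).

Definition own_gen_payoff i (x : R) :=
  (alpha i * q i * beta - kappa) * x - gg / 2 * q i * x ^+ 2.

Definition social_gen_payoff i (x : R) :=
  own_gen_payoff i x + (N%:R - 1) * lambda * q i * x.

Lemma sum_upd (P : pred 'I_N) (w g : 'I_N -> R) i x : P i ->
  \sum_(j < N | P j) w j * upd g i x j
  = \sum_(j < N | P j) w j * g j + w i * (x - g i).
Proof.
move=> Pi; rewrite !(bigD1 i Pi) /= {1}/upd eqxx.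
rewrite (eq_bigr (fun j => w j * g j)) => [|j /andP[_ /negbTE j_neq]]; last first.
  by rewrite /upd j_neq.
ring.
Qed.

Lemma payoff_upd g i x :
  pay (upd g i x) i = pay g i + (own_gen_payoff i x - own_gen_payoff i (g i)).
Proof.
rewrite /payoff /own_gen_payoff {1 3 4}/upd eqxx.
rewrite (eq_bigr (fun j => q j * g j)) => [|j /negbTE j_neq]; last by rewrite /upd j_neq.
ring.
Qed.

Lemma payoff_upd_other g i x k : k != i ->
  pay (upd g i x) k = pay g k + lambda * q i * (x - g i).
Proof.
move=> k_neq; rewrite /payoff sum_upd 1?eq_sym //.
have -> : upd g i x k = g k by rewrite /upd (negbTE k_neq).
ring.
Qed.

Lemma welfare_upd g i x :
  W (upd g i x) = W g + (social_gen_payoff i x - social_gen_payoff i (g i)).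
Proof.
rewrite /welfare (bigD1 i) //= [in RHS](bigD1 i) //= payoff_upd.
rewrite (eq_bigr (fun k => pay g k + lambda * q i * (x - g i))) => [|k]; last first.
  exact: payoff_upd_other.
rewrite big_split /=.
have -> : \sum_(k < N | k != i) lambda * q i * (x - g i)
          = (N%:R - 1) * (lambda * q i * (x - g i)).
  by rewrite sumr_except sumr_const card_ord mulrBl mul1r mulr_natl.
rewrite /social_gen_payoff; ring.
Qed.

Lemma nash_gen_foc g i : 0 < g i < 1 ->
    (forall x, 0 <= x <= 1 -> pay (upd g i x) i <= pay g i) ->
  alpha i * q i * beta - kappa = gg * q i * g i.
Proof.
move=> g_int best.
have -> : gg * q i * g i = 2 * (gg / 2 * q i) * g i by field.
apply: interior_max_quadratic g_int _ => x x01.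
by have := best x x01; rewrite payoff_upd gerDl subr_le0.
Qed.

Lemma social_gen_foc g i : 0 < g i < 1 -> (forall j, 0 <= g j <= 1) ->
    (forall h, (forall j, 0 <= h j <= 1) -> W h <= W g) ->
  alpha i * q i * beta - kappa + (N%:R - 1) * lambda * q i = gg * q i * g i.
Proof.
move=> g_int g_box opt.
have -> : gg * q i * g i = 2 * (gg / 2 * q i) * g i by field.
apply: interior_max_quadratic g_int _ => x x01.
have := opt _ (upd_in_unit_box i g_box x01).
rewrite welfare_upd gerDl subr_le0 /social_gen_payoff /own_gen_payoff.
lra.
Qed.

Lemma generality_gap gNE gSO i : q i != 0 -> gg != 0 ->
    0 < gNE i < 1 -> (forall x, 0 <= x <= 1 -> pay (upd gNE i x) i <= pay gNE i) ->
    0 < gSO i < 1 -> (forall j, 0 <= gSO j <= 1) ->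
    (forall h, (forall j, 0 <= h j <= 1) -> W h <= W gSO) ->
  gSO i - gNE i = gen_gap N lambda gg.
Proof.
move=> q_neq0 gg_neq0 NE_int best SO_int SO_box opt.
have nash := nash_gen_foc NE_int best.
have social := social_gen_foc SO_int SO_box opt.
apply: (mulfI (mulf_neq0 gg_neq0 q_neq0)).
by rewrite mulrBr -nash -social /gen_gap; field.
Qed.

End GeneralityChoice.

Section GapComparativeStatics.
Variable R : realFieldType.

Lemma gen_gap_gt0 n (lambda gg : R) : (1 < n)%N -> 0 < lambda -> 0 < gg ->
  0 < gen_gap n lambda gg.
Proof. by move=> n_gt1 l_gt0 gg_gt0; rewrite divr_gt0 // mulr_gt0 // subr_gt0 ltr1n. Qed.

Lemma gen_gap_homo_n (lambda gg : R) : 0 < lambda -> 0 < gg ->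
  {homo (fun n => gen_gap n lambda gg) : n1 n2 / (n1 < n2)%N >-> n1 < n2}.
Proof.
move=> l_gt0 gg_gt0 n1 n2 n12.
by rewrite /gen_gap ltr_pM2r ?invr_gt0 // ltr_pM2r // ltrD2r ltr_nat.
Qed.

Lemma gen_gap_homo_lambda n (gg : R) : (1 < n)%N -> 0 < gg ->
  {homo gen_gap n ^~ gg : l1 l2 / l1 < l2}.
Proof.
move=> n_gt1 gg_gt0 l1 l2 l12.
by rewrite /gen_gap ltr_pM2r ?invr_gt0 // ltr_pM2l // subr_gt0 ltr1n.
Qed.

Lemma gen_gap_anti_gg n (lambda : R) : (1 < n)%N -> 0 < lambda ->
  {in Num.pos &, {homo gen_gap n lambda : c1 c2 / c1 < c2 >-> c2 < c1}}.
Proof.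
move=> n_gt1 l_gt0 c1 c2 c1_pos c2_pos c12.
by rewrite /gen_gap ltr_pM2l ?ltf_pV2 // mulr_gt0 // subr_gt0 ltr1n.
Qed.

End GapComparativeStatics.

Theorem proposition1 (R : realFieldType) (N : nat) (alpha : 'I_N -> R)
    (beta lambda gq gg kappa : R) (q gNE gSO : 'I_N -> R) :
  (2 <= N)%N ->
  (forall i, 0 < alpha i) -> 0 <= beta -> 0 < lambda -> 0 < gq -> 0 < gg ->
  0 <= kappa ->
  (* fixed qualities, positive and in [0,1] *)
  (forall i, 0 < q i <= 1) ->
  (* gNE: Nash equilibrium in generality (each g_i a best response over [0,1]) *)
  (forall i, 0 <= gNE i <= 1) ->
  (forall i x, 0 <= x <= 1 ->
     payoff alpha beta lambda gq gg kappa q (upd gNE i x) i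
       <= payoff alpha beta lambda gq gg kappa q gNE i) ->
  (* gSO: social optimum of total domain welfare over generality profiles *)
  (forall i, 0 <= gSO i <= 1) ->
  (forall g : 'I_N -> R, (forall j, 0 <= g j <= 1) ->
     welfare alpha beta lambda gq gg kappa q g
       <= welfare alpha beta lambda gq gg kappa q gSO) ->
  (* both are interior solutions *)
  (forall i, 0 < gNE i < 1) -> (forall i, 0 < gSO i < 1) ->
  (forall i, gNE i < gSO i /\ gSO i - gNE i = gen_gap N lambda gg)
  /\ (forall n1 n2 : nat, (n1 < n2)%N -> gen_gap n1 lambda gg < gen_gap n2 lambda gg)
  /\ (forall l1 l2 : R, l1 < l2 -> gen_gap N l1 gg < gen_gap N l2 gg)
  /\ (forall c1 c2 : R, 0 < c1 -> c1 < c2 -> gen_gap N lambda c2 < gen_gap N lambda c1).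
Proof.
move=> N_gt1 _ _ l_gt0 _ gg_gt0 _ q_range _ NE SO_box SO NE_int SO_int.
have gap i : gSO i - gNE i = gen_gap N lambda gg.
  have q_neq0 : q i != 0 by case/andP: (q_range i) => /lt0r_neq0.
  exact: generality_gap q_neq0 (lt0r_neq0 gg_gt0) (NE_int i) (NE i) (SO_int i) SO_box SO.
split.
  by move=> i; split; [rewrite -subr_gt0 gap gen_gap_gt0 | exact: gap].
split; first exact: gen_gap_homo_n.
split; first exact: gen_gap_homo_lambda.
move=> c1 c2 c1_gt0 c12.
by apply: gen_gap_anti_gg; rewrite ?posrE // (lt_trans c1_gt0 c12).
Qed.
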